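(* If $2\le n\le5$, then $\Gamma=\mathrm{Q}$. If $n=6$, then $\Gamma\ne\mathrm{Q}$.
   Context: Let $\mathrm{C}$ be either the real Clifford algebra $C\ell_{p,q}$ with $p+q=n$, or the complex Clifford algebra $C\ell(\mathbb{C}^n)$. It has identity $e$ and generators $e_1,\dots,e_n$ satisfying $e_ae_b+e_be_a=2\eta_{ab}e$. In the real case $\eta=\mathrm{diag}(1,\dots,1,-1,\dots,-1)$ with $p$ entries $+1$ and $q$ entries $-1$. In the complex case $\eta=I_n$. $\mathrm{C}^k$ is the grade-$k$ subspace, spanned by the products $e_{a_1}\cdots e_{a_k}$ with $a_1<\dots<a_k$. The even subspace is $\mathrm{C}^{(0)}=\bigoplus_{k\text{ even}}\mathrm{C}^k$ and the odd subspace is $\mathrm{C}^{(1)}=\bigoplus_{k\text{ odd}}\mathrm{C}^k$. The reversion $U\mapsto\tilde U$ is the linear anti-automorphism acting on $\mathrm{C}^k$ as $(-1)^{k(k-1)/2}$. For $S\subseteq\mathrm{C}$, $S^\times$ is the set of elements of $S$ invertible in $\mathrm{C}$, and $\mathrm{C}^{\times(j)}:=(\mathrm{C}^{(j)})^\times$. $\mathrm{Z}$ is the center: $\mathrm{Z}=\mathrm{C}^0$ for $n$ even and $\mathrm{Z}=\mathrm{C}^0\oplus\mathrm{C}^n$ for $n$ odd. Define: <ul> <li>the Clifford group $\Gamma=\{T\in\mathrm{C}^\times: T\,\mathrm{C}^1\,T^{-1}\subseteq\mathrm{C}^1\}$;</li> <li>$\mathrm{P}:=\mathrm{Z}^\times(\mathrm{C}^{\times(0)}\cup\mathrm{C}^{\times(1)})=\{WT: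 W\in\mathrm{Z}^\times, T\in\mathrm{C}^{\times(0)}\cup\mathrm{C}^{\times(1)}\}$;</li> <li>$\mathrm{Q}:=\{T\in\mathrm{P}:\tilde TT\in\mathrm{Z}^\times\}$.</li> </ul> *)

(* Concrete model of the Clifford algebra with a diagonal
   metric: an element is a finite function from subsets A of {0,..,n-1}
   (the basis blades e_A = e_{a_1} ... e_{a_k}, a_1 < ... < a_k) to the
   coefficient field. *)
From HB Require Import structures.
From mathcomp Require Import all_boot all_order all_algebra.
From mathcomp Require Import reals.
From mathcomp Require Import complex.
Set Implicit Arguments. Unset Strict Implicit. Unset Printing Implicit Defensive.
Import Order.TTheory GRing.Theory Num.Theory.
Local Open Scope ring_scope.

Section Clifford.
Variables (F : fieldType) (n : nat) (eta : 'I_n -> F).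

Definition clif := {ffun {set 'I_n} -> F}.

(* e_A e_B = bsgn A B * (prod_{i in A /\ B} eta_i) e_{A symdiff B};
   the sign counts the transpositions needed to sort the concatenation *)
Definition bsgn (A B : {set 'I_n}) : F :=
  (-1) ^+ #|[set ab : 'I_n * 'I_n | [&& ab.1 \in A, ab.2 \in B & (ab.2 < ab.1)%N]]|.

Definition symd (A B : {set 'I_n}) : {set 'I_n} := (A :\: B) :|: (B :\: A).

Definition cmul (x y : clif) : clif :=
  [ffun C => \sum_(A : {set 'I_n}) \sum_(B : {set 'I_n} | symd A B == C)
      x A * y B * bsgn A B * \prod_(i in A :&: B) eta i].

Definition cone : clif := [ffun A : {set 'I_n} => if A == set0 then 1 else 0].

Definition cinv_of (T U : clif) : Prop := cmul T U = cone /\ cmul U T = cone.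
Definition cunit (T : clif) : Prop := exists U, cinv_of T U.

Definition grade (k : nat) (x : clif) : Prop := forall A : {set 'I_n}, #|A| != k -> x A = 0.
Definition even_part (x : clif) : Prop := forall A : {set 'I_n}, odd #|A| -> x A = 0.
Definition odd_part (x : clif) : Prop := forall A : {set 'I_n}, ~~ odd #|A| -> x A = 0.

Definition center (x : clif) : Prop := forall y, cmul x y = cmul y x.

Definition crev (x : clif) : clif := [ffun A : {set 'I_n} => (-1) ^+ 'C(#|A|, 2) * x A].

Definition Gamma (T : clif) : Prop :=
  exists U, cinv_of T U /\ forall v, grade 1 v -> grade 1 (cmul (cmul T v) U).

Definition Pset (T : clif) : Prop :=
  exists W S, [/\ center W, cunit W,
                  cunit S /\ (even_part S \/ odd_part S) & T = cmul W S].

Definition Qset (T : clif) : Prop :=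
  Pset T /\ (center (cmul (crev T) T) /\ cunit (cmul (crev T) T)).

End Clifford.

Definition eta_pq (R : realType) (p q : nat) (i : 'I_(p + q)) : R :=
  if (i < p)%N then 1 else -1.

Definition eta_C (R : realType) (n : nat) (i : 'I_n) : R[i] := 1.

From Pilot Require Import Defs.
From HB Require Import structures.
From mathcomp Require Import all_boot all_order all_algebra.
From mathcomp Require Import reals.
From mathcomp Require Import complex.
From mathcomp Require Import ring.
Set Implicit Arguments. Unset Strict Implicit. Unset Printing Implicit Defensive.
Import GRing.Theory Num.Theory.
Local Open Scope ring_scope.

(* We work in the blade model of Defs over any field of characteristic 0
   with a normalised diagonal metric (eta_i^2 = 1), which covers Cl_{p,q}
   and Cl(C^n). *)

(* The Clifford algebra as an F-algebra: the blade basis e_X multiplies as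
   e_X e_Y = coef X Y e_(X symdiff Y), and associativity reduces to the
   cocycle identity for the structure constants [coef]. *)
Section BladeAlgebra.
Variables (F : fieldType) (n : nat) (eta : 'I_n -> F).
Implicit Types X Y Z C : {set 'I_n}.

(* A copy of [clif F n] indexed by the metric, so that the ring structure
   can be declared canonically. *)
Definition cl_alg (e : 'I_n -> F) : predArgType := clif F n.
HB.instance Definition _ := GRing.Zmodule.on (cl_alg eta).
HB.instance Definition _ :=
  GRing.Lmodule.copy (cl_alg eta) {ffun {set 'I_n} -> F^o}.
Local Notation CL := (cl_alg eta).

Definition swap_sign (a b : 'I_n) : F := if (b < a)%N then -1 else 1.
Definition merge_sign X Y : F := \prod_(a in X) \prod_(b in Y) swap_sign a b.

(* Signs are involutive; this makes the sign a bimultiplicative cocycle. *)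
Lemma swap_sign_sq a b : swap_sign a b * swap_sign a b = 1.
Proof. by rewrite /swap_sign; case: ifP; rewrite ?mulrNN mulr1. Qed.

Lemma bsgnE X Y : bsgn F X Y = merge_sign X Y.
Proof.
rewrite /bsgn -prodr_const.
rewrite (eq_bigl (fun p : 'I_n * 'I_n => (p.1 \in X) && ((p.2 \in Y) && (p.2 < p.1)%N)));
  last by move=> p; rewrite inE.
rewrite -(pair_big_dep (fun a => a \in X) (fun a b => (b \in Y) && (b < a)%N)
                       (fun _ _ => -1)) /=.
apply: eq_bigr => a _.
rewrite (big_mkcond (fun b => _ && _)) (big_mkcond (fun b => b \in Y)) /=.
by apply: eq_bigr => b _; rewrite /swap_sign; case: (b \in Y); case: (b < a)%N.
Qed.

Lemma symdA X Y Z : symd (symd X Y) Z = symd X (symd Y Z).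
Proof.
apply/setP => i; rewrite /symd !inE.
by case: (i \in X); case: (i \in Y); case: (i \in Z).
Qed.

Lemma symdC X Y : symd X Y = symd Y X.
Proof. by rewrite /symd setUC. Qed.

Lemma symd0 X : symd X set0 = X.
Proof. by apply/setP => i; rewrite /symd !inE; case: (i \in X). Qed.

Lemma sym0d X : symd set0 X = X.
Proof. by rewrite symdC symd0. Qed.

Lemma symdd X : symd X X = set0.
Proof. by apply/setP => i; rewrite /symd !inE; case: (i \in X). Qed.

Lemma symdK X Y : symd X (symd X Y) = Y.
Proof. by rewrite -symdA symdd sym0d. Qed.

Lemma symdKr X Y : symd (symd X Y) Y = X.
Proof. by rewrite symdA symdd symd0. Qed.

Lemma prod_symd (f : 'I_n -> F) X Y : (forall i, f i * f i = 1) ->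
  \prod_(i in symd X Y) f i = \prod_(i in X) f i * \prod_(i in Y) f i.
Proof.
move=> f2; rewrite !(big_mkcond (fun i => i \in _)) -big_split /=.
apply: eq_bigr => i _; rewrite /symd !inE.
by case: (i \in X); case: (i \in Y); rewrite /= ?mulr1 ?mul1r ?f2.
Qed.

Lemma merge_sign_symdl X Y Z : merge_sign (symd X Y) Z = merge_sign X Z * merge_sign Y Z.
Proof.
apply: prod_symd => a; rewrite -big_split /=.
by apply: big1 => b _; exact: swap_sign_sq.
Qed.

Lemma merge_sign_symdr X Y Z : merge_sign X (symd Y Z) = merge_sign X Y * merge_sign X Z.
Proof.
rewrite /merge_sign -big_split /=; apply: eq_bigr => a _.
by apply: prod_symd => b; exact: swap_sign_sq.
Qed.

(* The metric weight of a blade, e_X e_X = +- metric_weight X. *)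
Definition metric_weight (S : {set 'I_n}) : F := \prod_(i in S) eta i.

Definition coef X Y := merge_sign X Y * metric_weight (X :&: Y).

Lemma coef_cocycle X Y Z : coef X Y * coef (symd X Y) Z = coef Y Z * coef X (symd Y Z).
Proof.
have weight_cocycle : metric_weight (X :&: Y) * metric_weight (symd X Y :&: Z) =
                      metric_weight (Y :&: Z) * metric_weight (X :&: symd Y Z).
  rewrite /metric_weight !(big_mkcond (fun i => i \in _)) -!big_split /=.
  apply: eq_bigr => i _; rewrite /symd !inE.
  by case: (i \in X); case: (i \in Y); case: (i \in Z); rewrite /= ?mulr1 ?mul1r.
rewrite /coef merge_sign_symdl !merge_sign_symdr.
transitivity (merge_sign X Y * merge_sign X Z * merge_sign Y Z *
  (metric_weight (X :&: Y) * metric_weight (symd X Y :&: Z))); first ring.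
by rewrite weight_cocycle; ring.
Qed.

Lemma coef0l Y : coef set0 Y = 1.
Proof. by rewrite /coef /merge_sign /metric_weight set0I !big_set0 mulr1. Qed.

Lemma coef0r X : coef X set0 = 1.
Proof.
rewrite /coef /merge_sign /metric_weight setI0 big_set0 mulr1.
by apply: big1 => a _; exact: big_set0.
Qed.

Definition blade X : CL := [ffun C => (C == X)%:R].

Lemma scalarE (a b : F) : a *: (b : F^o) = a * b. Proof. by []. Qed.

Lemma blade_expand (x : CL) : x = \sum_X x X *: blade X.
Proof.
apply/ffunP => C; rewrite sum_ffunE (bigD1 C) //= big1 => [|X nX].
  by rewrite !ffunE eqxx scalarE mulr1 addr0.
by rewrite !ffunE scalarE eq_sym (negbTE nX) mulr0.
Qed.

Lemma cmulE (x y : CL) :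
  cmul eta x y = \sum_X \sum_Y (x X * y Y * coef X Y) *: blade (symd X Y).
Proof.
apply/ffunP => C; rewrite !ffunE sum_ffunE; apply: eq_bigr => X _.
rewrite sum_ffunE (big_mkcond (fun Y => symd X Y == C)) /=; apply: eq_bigr => Y _.
rewrite !ffunE scalarE bsgnE /coef /metric_weight eq_sym.
by case: eqP; rewrite ?mulr1 ?mulr0 -?mulrA.
Qed.

Lemma cmul_bladel X (y : CL) :
  cmul eta (blade X) y = \sum_Y (y Y * coef X Y) *: blade (symd X Y).
Proof.
rewrite cmulE (bigD1 X) //= [X in _ + X]big1 => [|X' nX'].
  by rewrite addr0; apply: eq_bigr => Y _; rewrite ffunE eqxx mul1r.
by apply: big1 => Y _; rewrite ffunE (negbTE nX') !mul0r scale0r.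
Qed.

Lemma cmul_blader (x : CL) Y :
  cmul eta x (blade Y) = \sum_X (x X * coef X Y) *: blade (symd X Y).
Proof.
rewrite cmulE; apply: eq_bigr => X _.
rewrite (bigD1 Y) //= big1 => [|Y' nY'].
  by rewrite addr0 ffunE eqxx mulr1.
by rewrite ffunE (negbTE nY') mulr0 mul0r scale0r.
Qed.

Lemma cmulDl (x y z : CL) : cmul eta (x + y) z = cmul eta x z + cmul eta y z.
Proof.
rewrite !cmulE -big_split; apply: eq_bigr => X _; rewrite -big_split.
by apply: eq_bigr => Y _; rewrite !ffunE !mulrDl scalerDl.
Qed.

Lemma cmulDr (x y z : CL) : cmul eta x (y + z) = cmul eta x y + cmul eta x z.
Proof.
rewrite !cmulE -big_split; apply: eq_bigr => X _; rewrite -big_split.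
by apply: eq_bigr => Y _; rewrite !ffunE !mulrDr !mulrDl scalerDl.
Qed.

Lemma cmulZl a (x y : CL) : cmul eta (a *: x) y = a *: (cmul eta x y : CL).
Proof.
rewrite !cmulE scaler_sumr; apply: eq_bigr => X _; rewrite scaler_sumr.
by apply: eq_bigr => Y _; rewrite !ffunE scalarE scalerA !mulrA.
Qed.

Lemma cmulZr a (x y : CL) : cmul eta x (a *: y) = a *: (cmul eta x y : CL).
Proof.
rewrite !cmulE scaler_sumr; apply: eq_bigr => X _; rewrite scaler_sumr.
by apply: eq_bigr => Y _; rewrite !ffunE scalarE scalerA [x X * _]mulrCA -!mulrA.
Qed.

Lemma cmul_suml I (r : seq I) (P : pred I) (f : I -> CL) z :
  cmul eta (\sum_(i <- r | P i) f i) z = \sum_(i <- r | P i) cmul eta (f i) z.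
Proof.
apply: (big_morph (fun u => cmul eta u z) (fun u v => cmulDl u v z)).
by rewrite -[X in cmul _ X _](scale0r (0 : CL)) cmulZl scale0r.
Qed.

Lemma cmul_sumr I (r : seq I) (P : pred I) (f : I -> CL) z :
  cmul eta z (\sum_(i <- r | P i) f i) = \sum_(i <- r | P i) cmul eta z (f i).
Proof.
apply: (big_morph (fun u => cmul eta z u) (fun u v => cmulDr z u v)).
by rewrite -[X in cmul _ _ X](scale0r (0 : CL)) cmulZr scale0r.
Qed.

(* Associativity: both sides expand to the triple sum weighted by the two
   sides of the cocycle identity. *)
Lemma cmulA (x y z : CL) : cmul eta (cmul eta x y) z = cmul eta x (cmul eta y z).
Proof.
transitivity (\sum_X \sum_Y \sum_Z
   (x X * y Y * z Z * (coef X Y * coef (symd X Y) Z)) *: blade (symd (symd X Y) Z)).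
  rewrite [cmul eta x y]cmulE cmul_suml; apply: eq_bigr => X _.
  rewrite cmul_suml; apply: eq_bigr => Y _.
  rewrite cmulZl cmul_bladel scaler_sumr; apply: eq_bigr => Z _.
  by rewrite scalerA; apply: (congr1 (fun a : F => a *: (_ : CL))); ring.
symmetry.
transitivity (\sum_Y \sum_Z \sum_X
   (x X * y Y * z Z * (coef X Y * coef (symd X Y) Z)) *: blade (symd (symd X Y) Z)).
  rewrite [cmul eta y z]cmulE cmul_sumr; apply: eq_bigr => Y _.
  rewrite cmul_sumr; apply: eq_bigr => Z _.
  rewrite cmulZr cmul_blader scaler_sumr; apply: eq_bigr => X _.
  by rewrite scalerA symdA coef_cocycle; apply: (congr1 (fun a : F => a *: (_ : CL))); ring.
under eq_bigr do rewrite exchange_big.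
by rewrite exchange_big.
Qed.

Lemma cmul1l (y : CL) : cmul eta (blade set0) y = y.
Proof.
rewrite cmul_bladel [RHS]blade_expand; apply: eq_bigr => Y _.
by rewrite coef0l mulr1 sym0d.
Qed.

Lemma cmul1r (y : CL) : cmul eta y (blade set0) = y.
Proof.
rewrite cmul_blader [RHS]blade_expand; apply: eq_bigr => Y _.
by rewrite coef0r mulr1 symd0.
Qed.

Lemma blade0_neq0 : blade set0 != 0.
Proof.
by apply/eqP => /ffunP/(_ set0); rewrite !ffunE eqxx => /eqP; rewrite oner_eq0.
Qed.

Definition clmul (x y : CL) : CL := cmul eta x y.
Fact clmulA : associative clmul. Proof. by move=> x y z; rewrite /clmul cmulA. Qed.
Fact clmul1l : left_id (blade set0) clmul. Proof. exact: cmul1l. Qed.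
Fact clmul1r : right_id (blade set0) clmul. Proof. exact: cmul1r. Qed.
Fact clmulDl : left_distributive clmul +%R. Proof. exact: cmulDl. Qed.
Fact clmulDr : right_distributive clmul +%R. Proof. exact: cmulDr. Qed.
HB.instance Definition _ := GRing.Zmodule_isNzRing.Build CL
  clmulA clmul1l clmul1r clmulDl clmulDr blade0_neq0.
HB.instance Definition _ := GRing.Lmodule_isLalgebra.Build F CL
  (fun a (x y : CL) => esym (cmulZl a x y)).
HB.instance Definition _ := GRing.Lalgebra_isAlgebra.Build F CL
  (fun a (x y : CL) => esym (cmulZr a x y)).

Lemma oneE : 1 = blade set0. Proof. by []. Qed.

Lemma coneE : cone F n = blade set0.
Proof. by apply/ffunP => C; rewrite !ffunE; case: eqP. Qed.

Lemma bladeM X Y : blade X * blade Y = coef X Y *: blade (symd X Y).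
Proof.
rewrite /GRing.mul /= /clmul cmul_bladel (bigD1 Y) //= big1 => [|Y' nY'].
  by rewrite addr0 ffunE eqxx mul1r.
by rewrite ffunE (negbTE nY') mul0r scale0r.
Qed.

End BladeAlgebra.

Section NormalisedClifford.
Variables (F : numFieldType) (n : nat) (eta : 'I_n -> F).
Hypothesis eta_sq : forall i, eta i * eta i = 1.
Local Notation CL := (cl_alg eta).
Local Notation e := (blade eta).
Local Notation coef := (coef eta).
Implicit Types X Y Z C D : {set 'I_n}.
Implicit Types x y z v w : CL.

Lemma coordD x y C : (x + y) C = x C + y C.
Proof. by rewrite ffunE. Qed.

Lemma coordZ a x C : (a *: x) C = a * x C.
Proof. by rewrite ffunE. Qed.

(* Characteristic 0 separates the signs. *)
Lemma N1_neq1 : (-1 : F) != 1.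
Proof.
by rewrite eqNr oner_eq0.
Qed.

Lemma sign_eq1 k : (-1 : F) ^+ k = 1 -> ~~ odd k.
Proof.
rewrite -signr_odd; case: (odd k) => //=; rewrite expr1 => /eqP.
by rewrite (negbTE N1_neq1).
Qed.

(* With a normalised metric every sign and weight squares to 1, so all
   blades are invertible. *)
Lemma merge_sign_sq X Y : merge_sign F X Y * merge_sign F X Y = 1.
Proof.
rewrite /merge_sign -big_split; apply: big1 => a _; rewrite -big_split.
by apply: big1 => b _; exact: swap_sign_sq.
Qed.

Lemma metric_weight_sq S : metric_weight eta S * metric_weight eta S = 1.
Proof. by rewrite /metric_weight -big_split; apply: big1 => i _; exact: eta_sq. Qed.

Lemma metric_weight_neq0 S : metric_weight eta S != 0.
Proof.
apply/eqP => w0; have := metric_weight_sq S.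
by rewrite w0 mul0r => /eqP; rewrite eq_sym oner_eq0.
Qed.

Lemma coef_sq X Y : coef X Y * coef X Y = 1.
Proof. by rewrite /coef mulrACA merge_sign_sq metric_weight_sq mulr1. Qed.

Lemma coef_neq0 X Y : coef X Y != 0.
Proof.
apply/eqP => h; have := coef_sq X Y; rewrite h mul0r => /eqP.
by rewrite eq_sym oner_eq0.
Qed.

Lemma mul_bladel_coord X x C : (e X * x) C = coef X (symd X C) * x (symd X C).
Proof.
rewrite {1}[x]blade_expand mulr_sumr sum_ffunE (bigD1 (symd X C)) //= big1 => [|Y nY].
  by rewrite -scalerAr bladeM !ffunE symdK eqxx !scalarE mulr1 addr0 mulrC.
rewrite -scalerAr bladeM !ffunE !scalarE; case: eqP => [hC|]; last by rewrite !mulr0.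
by move: nY; rewrite hC symdK eqxx.
Qed.

Lemma mul_blader_coord x Y C : (x * e Y) C = coef (symd C Y) Y * x (symd C Y).
Proof.
rewrite {1}[x]blade_expand mulr_suml sum_ffunE (bigD1 (symd C Y)) //= big1 => [|X nX].
  by rewrite -scalerAl bladeM !ffunE symdKr eqxx !scalarE mulr1 addr0 mulrC.
rewrite -scalerAl bladeM !ffunE !scalarE; case: eqP => [hC|]; last by rewrite !mulr0.
by move: nX; rewrite hC symdKr eqxx.
Qed.

Lemma scalar_partC x y : (x * y) set0 = (y * x) set0.
Proof.
have scalar_partE u w : (u * w) set0 = \sum_X u X * w X * coef X X.
  rewrite {1}[u]blade_expand mulr_suml sum_ffunE; apply: eq_bigr => X _.
  by rewrite -scalerAl ffunE scalarE mul_bladel_coord symd0 mulrA mulrAC.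
by rewrite !scalar_partE; apply: eq_bigr => X _; rewrite (mulrC (x X)).
Qed.

Definition parity (b : bool) x := forall C, odd #|C| != b -> x C = 0.

Lemma odd_symd X Y : odd #|symd X Y| = odd #|X| (+) odd #|Y|.
Proof.
rewrite /symd cardsU.
have -> : (X :\: Y) :&: (Y :\: X) = set0.
  by apply/setP => i; rewrite !inE; case: (i \in X); case: (i \in Y).
rewrite cards0 subn0 -(cardsID Y X) -(cardsID X Y) !oddD (setIC Y X).
by case: (odd #|X :&: Y|); case: (odd #|X :\: Y|); case: (odd #|Y :\: X|).
Qed.

Lemma parity_mul a b x y : parity a x -> parity b y -> parity (a (+) b) (x * y).
Proof.
move=> hx hy C hC; rewrite [x]blade_expand mulr_suml sum_ffunE big1 // => X _.
rewrite -scalerAl ffunE scalarE mul_bladel_coord.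
case: (eqVneq (odd #|X|) a) => [oX|/hx->]; last by rewrite mul0r.
case: (eqVneq (odd #|symd X C|) b) => [oXC|/hy->]; last by rewrite !mulr0.
by move: hC; rewrite -(symdK X C) odd_symd oX oXC eqxx.
Qed.

Lemma parity_add b x y : parity b x -> parity b y -> parity b (x + y).
Proof. by move=> hx hy C hC; rewrite !ffunE hx ?hy ?addr0. Qed.

Lemma parity_opp b x : parity b x -> parity b (- x).
Proof. by move=> hx C hC; rewrite !ffunE hx ?oppr0. Qed.

Lemma parity_scale b a x : parity b x -> parity b (a *: x).
Proof. by move=> hx C hC; rewrite !ffunE hx ?scalarE ?mulr0. Qed.

Lemma parity_blade X : parity (odd #|X|) (e X).
Proof. by move=> C hC; rewrite ffunE; case: eqP => // E; move: hC; rewrite E eqxx. Qed.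

Lemma parity_one : parity false 1.
Proof. by rewrite oneE; move: (parity_blade (X := set0)); rewrite cards0. Qed.

Definition parity_part (b : bool) x : CL :=
  [ffun C : {set 'I_n} => if odd #|C| == b then x C else 0].

Lemma parity_partP b x : parity b (parity_part b x).
Proof. by move=> C hC; rewrite ffunE (negbTE hC). Qed.

Lemma parity_part_split x : x = parity_part false x + parity_part true x.
Proof. by apply/ffunP => C; rewrite !ffunE; case: (odd #|C|); rewrite ?add0r ?addr0. Qed.

Lemma parity_both x : parity false x -> parity true x -> x = 0.
Proof.
move=> h0 h1; apply/ffunP => C; rewrite ffunE.
by case: (boolP (odd #|C|)) => oC; [apply: h0 | apply: h1]; rewrite ?oC ?(negbTE oC).
Qed.

Lemma parity_split_eq x0 x1 y0 y1 :
  parity false x0 -> parity true x1 -> parity false y0 -> parity true y1 ->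
  x0 + x1 = y0 + y1 -> x0 = y0 /\ x1 = y1.
Proof.
move=> px0 px1 py0 py1 E.
have D : x0 - y0 = y1 - x1 by apply/eqP; rewrite subr_eq addrC addrA -E addrK.
have even_diff : parity false (x0 - y0) by apply: parity_add => //; apply: parity_opp.
have odd_diff : parity true (x0 - y0) by rewrite D; apply: parity_add => //; apply: parity_opp.
have e0 : x0 = y0 by apply/eqP; rewrite -subr_eq0 (parity_both even_diff odd_diff).
by split => //; move: E; rewrite e0 => /addrI.
Qed.

(* Signs of commuting blades: e_D e_i = commute_sign D i * e_i e_D, up to
   the common metric weight. *)
Definition commute_sign D (i : 'I_n) : F := \prod_(a in D) (if a == i then 1 else -1).

Lemma merge_sign_commute D i :
  merge_sign F D [set i] * merge_sign F [set i] D = commute_sign D i.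
Proof.
rewrite /merge_sign big_set1 -big_split /=; apply: eq_bigr => a _.
rewrite big_set1 /swap_sign; case: (eqVneq a i) => [->|nai]; first by rewrite ltnn mulr1.
case: ltngtP => h /=; rewrite ?mulr1 ?mul1r //.
by move: nai; rewrite (val_inj h) eqxx.
Qed.

Lemma merge_sign_self X : merge_sign F X X = (-1) ^+ 'C(#|X|, 2).
Proof.
move: {2}#|X| (erefl #|X|) => k; elim: k X => [|k IH] X hX.
  have -> : X = set0 by apply/eqP; rewrite -cards_eq0 hX.
  by rewrite /merge_sign big_set0 cards0.
have [i iX] : exists i, i \in X by apply/set0Pn; rewrite -card_gt0 hX.
have hY : #|X :\ i| = k by move: hX; rewrite (cardsD1 i X) iX add1n => -[].
have XE : X = symd (X :\ i) [set i].
  apply/setP => j; rewrite /symd !inE.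
  by case: (eqVneq j i) => [->|nji]; [rewrite iX | case: (j \in X)].
have sign_i : merge_sign F (X :\ i) [set i] * merge_sign F [set i] (X :\ i) = (-1) ^+ k.
  rewrite merge_sign_commute -hY -prodr_const; apply: eq_bigr => a.
  by rewrite !inE => /andP [/negbTE -> _].
have sign_ii : merge_sign F [set i] [set i] = 1 by rewrite /merge_sign !big_set1 /swap_sign ltnn.
rewrite [in LHS]XE merge_sign_symdl !merge_sign_symdr sign_ii IH // mulr1 -mulrA.
by rewrite sign_i hY hX -exprD binS bin1.
Qed.

Definition reversion x : CL := crev x.

Lemma reversionD x y : reversion (x + y) = reversion x + reversion y.
Proof. by apply/ffunP => C; rewrite !ffunE mulrDr. Qed.

Lemma reversionZ a x : reversion (a *: x) = a *: reversion x.
Proof. by apply/ffunP => C; rewrite !ffunE !scalarE mulrCA. Qed.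

Lemma reversion_sum I (r : seq I) (P : pred I) (f : I -> CL) :
  reversion (\sum_(i <- r | P i) f i) = \sum_(i <- r | P i) reversion (f i).
Proof.
apply: (big_morph reversion reversionD).
by apply/ffunP => C; rewrite !ffunE mulr0.
Qed.

Lemma reversion_blade X : reversion (e X) = merge_sign F X X *: e X.
Proof.
apply/ffunP => C; rewrite !ffunE scalarE merge_sign_self.
by case: eqP => [->|]; rewrite ?mulr0.
Qed.

Lemma reversion_bladeM X Y :
  reversion (e X * e Y) = reversion (e Y) * reversion (e X).
Proof.
rewrite bladeM reversionZ !reversion_blade -scalerAl -scalerAr bladeM !scalerA symdC.
apply: (congr1 (fun a : F => a *: (_ : CL))).
rewrite /coef merge_sign_symdl !merge_sign_symdr (setIC Y X).
rewrite -[RHS]mul1r -(merge_sign_sq X Y); ring.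
Qed.

Lemma reversionM x y : reversion (x * y) = reversion y * reversion x.
Proof.
have termM X Y : reversion ((x X *: e X) * (y Y *: e Y)) =
                 reversion (y Y *: e Y) * reversion (x X *: e X).
  rewrite -scalerAl -scalerAr !reversionZ reversion_bladeM.
  by rewrite -scalerAl -scalerAr !scalerA mulrC.
have expandL : reversion (x * y) =
    \sum_X \sum_Y reversion ((x X *: e X) * (y Y *: e Y)).
  rewrite {1}[x]blade_expand {1}[y]blade_expand mulr_suml reversion_sum.
  by apply: eq_bigr => X _; rewrite mulr_sumr reversion_sum.
have expandR : reversion y * reversion x =
    \sum_Y \sum_X reversion (y Y *: e Y) * reversion (x X *: e X).
  rewrite {1}[y]blade_expand {1}[x]blade_expand !reversion_sum mulr_suml.
  by apply: eq_bigr => Y _; rewrite mulr_sumr.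
rewrite expandL expandR exchange_big.
by apply: eq_bigr => Y _; apply: eq_bigr => X _; rewrite termM.
Qed.

Lemma reversionK x : reversion (reversion x) = x.
Proof. by apply/ffunP => C; rewrite !ffunE mulrA -exprMn mulrNN mulr1 expr1n mul1r. Qed.

Lemma reversion1 : reversion 1 = 1.
Proof. by rewrite oneE reversion_blade merge_sign_self cards0 scale1r. Qed.

Lemma parity_reversion b x : parity b x -> parity b (reversion x).
Proof. by move=> h C hC; rewrite ffunE h ?mulr0. Qed.

Lemma grade1_reversion v : grade 1 v -> reversion v = v.
Proof.
move=> hv; apply/ffunP => C; rewrite ffunE.
by case: (eqVneq #|C| 1%N) => [->|h]; rewrite ?mul1r // (hv C h) mulr0.
Qed.

Lemma grade1_parity v : grade 1 v -> parity true v.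
Proof. by move=> hv C hC; apply: hv; apply: contraNneq hC => ->. Qed.

Lemma grade1_generator i : grade 1 (e [set i]).
Proof. by move=> C hC; rewrite ffunE; case: eqP => // E; move: hC; rewrite E cards1 eqxx. Qed.

Definition central x := forall y, x * y = y * x.

Lemma central1 : central 1.
Proof. by move=> z; rewrite mul1r mulr1. Qed.

Lemma centralM x y : central x -> central y -> central (x * y).
Proof. by move=> hx hy z; rewrite -mulrA hy mulrA hx mulrA. Qed.

Lemma centralD x y : central x -> central y -> central (x + y).
Proof. by move=> hx hy z; rewrite mulrDl mulrDr hx hy. Qed.

Lemma centralZ a x : central x -> central (a *: x).
Proof. by move=> hx z; rewrite -scalerAl -scalerAr hx. Qed.

Lemma central_inverse x y : central x -> y * x = 1 -> x * y = 1 -> central y.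
Proof.
move=> hx yx xy z.
by rewrite -[y * z]mulr1 -xy (mulrA (y * z)) -(mulrA y z x) -hx (mulrA y x z) yx mul1r.
Qed.

Lemma central_reversion x : central x -> central (reversion x).
Proof. by move=> hx z; rewrite -[z]reversionK -reversionM -hx reversionM. Qed.

Lemma commute_sign_full i : commute_sign [set: 'I_n] i = (-1) ^+ n.-1.
Proof.
rewrite /commute_sign (bigD1 i) ?inE //= eqxx mul1r.
rewrite (eq_bigl (fun a => a \in [set~ i])) => [|a]; last by rewrite !inE.
rewrite (eq_bigr (fun _ => -1)) => [|a]; last by rewrite !inE => /negbTE ->.
by rewrite prodr_const cardsC1 card_ord.
Qed.

Lemma blade_commute D i : e D * e [set i] = commute_sign D i *: (e [set i] * e D).
Proof.
rewrite !bladeM symdC scalerA /coef setIC mulrA; congr (_ * _ *: _).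
by rewrite -merge_sign_commute -mulrA merge_sign_sq mulr1.
Qed.

Lemma central_generators x : (forall i, x * e [set i] = e [set i] * x) -> central x.
Proof.
move=> hx.
have hb X : x * e X = e X * x.
  move: {2}#|X| (erefl #|X|) => k; elim: k X => [|k IH] X hX.
    have -> : X = set0 by apply/eqP; rewrite -cards_eq0 hX.
    by rewrite -oneE mulr1 mul1r.
  have [i iX] : exists i, i \in X by apply/set0Pn; rewrite -card_gt0 hX.
  have hY : #|X :\ i| = k by move: hX; rewrite (cardsD1 i X) iX add1n => -[].
  have XE : X = symd (X :\ i) [set i].
    apply/setP => j; rewrite /symd !inE.
    by case: (eqVneq j i) => [->|nji]; [rewrite iX | case: (j \in X)].
  have -> : e X = (coef (X :\ i) [set i])^-1 *: (e (X :\ i) * e [set i]).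
    by rewrite bladeM -XE scalerA mulVf ?coef_neq0 ?scale1r.
  rewrite -scalerAr -scalerAl; congr (_ *: _).
  by rewrite mulrA IH // -mulrA hx mulrA.
move=> y; rewrite [y]blade_expand mulr_sumr mulr_suml; apply: eq_bigr => X _.
by rewrite -scalerAr -scalerAl hb.
Qed.

Lemma central_commute_sign x D : central x -> x D != 0 -> forall i, commute_sign D i = 1.
Proof.
move=> hx hD i.
have := congr1 (fun z : CL => z (symd D [set i])) (hx (e [set i])).
rewrite /= mul_blader_coord mul_bladel_coord symdKr (symdC D) symdK.
move/(mulIf hD); rewrite /coef (setIC D) => /(mulIf (metric_weight_neq0 _)) signs.
by rewrite -merge_sign_commute signs merge_sign_sq.
Qed.

Lemma central_support x D : central x -> x D != 0 -> D = set0 \/ (D = setT /\ odd n).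
Proof.
move=> hx hD; have sign1 := central_commute_sign hx hD.
case: (eqVneq D set0) => [->|D0]; first by left.
have [i iD] : exists i, i \in D by apply/set0Pn.
case: (eqVneq D setT) => [DT|DT].
  right; split => //; move: (sign1 i); rewrite DT commute_sign_full => /sign_eq1.
  by rewrite -{2}(prednK (leq_ltn_trans (leq0n i) (ltn_ord i))).
exfalso; have [j jD] : exists j, j \notin D.
  apply/existsP; move: DT; apply: contraNT; rewrite negb_exists => /forallP h.
  by apply/eqP/setP => a; rewrite inE; move: (h a); rewrite negbK.
have flip : commute_sign D j = - commute_sign D i.
  rewrite /commute_sign (bigD1 i iD) [in RHS](bigD1 i iD) /= eqxx mul1r.
  rewrite ifF ?mulN1r; last by apply/negbTE; apply: contraNneq jD => <-.
  congr (- _); apply: eq_bigr => a /andP [aD ai].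
  by rewrite (negbTE ai) ifF //; apply/negbTE; apply: contraNneq jD => <-.
by move: flip; rewrite !sign1 => /eqP; rewrite eq_sym (negbTE N1_neq1).
Qed.

Local Notation I := (e setT).

Lemma central_decomp x : (0 < n)%N -> central x -> x = x set0 *: 1 + x setT *: I.
Proof.
move=> n0 hx; have T0 : [set: 'I_n] != set0 by apply/set0Pn; exists (Ordinal n0).
rewrite {1}[x]blade_expand (bigD1 set0) //= (bigD1 setT) //= big1 ?addr0 ?oneE //.
move=> X /andP [X0 XT]; case: (eqVneq (x X) 0) => [->|hX]; first by rewrite scale0r.
by case: (central_support hx hX) => [E|[E _]]; [move: X0 | move: XT]; rewrite E eqxx.
Qed.

Lemma central_pseudoscalar_coord x : (0 < n)%N -> central x -> x setT != 0 -> odd n.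
Proof.
move=> n0 hx hX; case: (central_support hx hX) => [E|[]//].
by move: (in_setT (Ordinal n0)); rewrite E inE.
Qed.

Lemma pseudoscalar_generator i : I * e [set i] = (-1) ^+ n.-1 *: (e [set i] * I).
Proof. by rewrite blade_commute commute_sign_full. Qed.

Lemma pseudoscalar_central : odd n -> central I.
Proof.
move=> hn; apply: central_generators => i.
have n0 : (0 < n)%N by apply: leq_ltn_trans (ltn_ord i).
move: hn; rewrite -{1}(prednK n0) /= => /negbTE even_pred.
by rewrite pseudoscalar_generator -signr_odd even_pred scale1r.
Qed.

Definition Isq : F := coef setT setT.
Definition zform (a b : F) : CL := a *: 1 + b *: I.

Lemma pseudoscalar_sq : I * I = Isq *: 1.
Proof. by rewrite bladeM symdd oneE. Qed.

Lemma zformM a b c d : zform a b * zform c d = zform (a * c + b * d * Isq) (a * d + b * c).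
Proof.
rewrite /zform !mulrDl !mulrDr -!scalerAl -!scalerAr !mul1r !mulr1 pseudoscalar_sq !scalerA.
by rewrite !scalerDl [(b * c) *: I + _]addrC addrACA.
Qed.

Lemma zformC a b c d : zform a b * zform c d = zform c d * zform a b.
Proof. by rewrite !zformM; congr zform; ring. Qed.

Lemma zform_inverse a b (k := a * a - b * b * Isq) : k != 0 ->
  zform a b * (k^-1 *: zform a (- b)) = 1 /\ (k^-1 *: zform a (- b)) * zform a b = 1.
Proof.
move=> hk.
have norm : zform a b * zform a (- b) = k *: 1.
  rewrite zformM; have -> : a * - b + b * a = 0 by ring.
  by rewrite /zform scale0r addr0 /k; congr (_ *: _); ring.
split; first by rewrite -scalerAr norm scalerA mulVf // scale1r.
by rewrite -scalerAl -zformC norm scalerA mulVf // scale1r.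
Qed.

Lemma zform_complementary a b :
  a * a - b * b * Isq = 0 -> (1 - a) * (1 - a) - (- b) * (- b) * Isq = 0 ->
  zform a b * zform (1 - a) (- b) = 0 /\ b != 0.
Proof.
move=> k0 k1; split.
  rewrite zformM.
  have -> : a * (1 - a) + b * - b * Isq =
    a * (((1 - a) * (1 - a) - (- b) * (- b) * Isq) - (a * a - b * b * Isq)) +
    (a * a - b * b * Isq) by ring.
  have -> : a * - b + b * (1 - a) =
    b * (((1 - a) * (1 - a) - (- b) * (- b) * Isq) - (a * a - b * b * Isq)) by ring.
  by rewrite k0 k1 !subr0 !mulr0 addr0 /zform !scale0r addr0.
apply/eqP => b0; move: k0 k1; rewrite b0 !mul0r subr0 => /eqP.
rewrite mulf_eq0 orbb => /eqP ->; rewrite oppr0 !mul0r addr0 subr0 mulr1 => /eqP.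
by rewrite oner_eq0.
Qed.

Definition invertible x := exists y, x * y = 1 /\ y * x = 1.
Definition in_Gamma T := exists U, (T * U = 1 /\ U * T = 1) /\
  forall v, grade 1 v -> grade 1 (T * v * U).
Definition in_P T := exists W S, [/\ central W, invertible W,
  invertible S /\ (parity false S \/ parity true S) & T = W * S].
Definition in_Q T := in_P T /\ (central (reversion T * T) /\ invertible (reversion T * T)).

Section InvertibleElement.
Variables T U : CL.
Hypotheses (TU : T * U = 1) (UT : U * T = 1).

Lemma P_of_central_unit M M' b :
  central M -> M * M' = 1 -> M' * M = 1 -> parity b (T * M) -> in_P T.
Proof.
move=> cM MM' M'M homog; have cM' := central_inverse cM M'M MM'.
exists M', (T * M); split => //; first by exists M.
  split; last by case: b homog => homog; [right | left].
  exists (M' * U); split; first by rewrite -mulrA (mulrA M) MM' mul1r TU.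
  by rewrite -mulrA (mulrA U) UT mul1r M'M.
by rewrite cM' -mulrA MM' mulr1.
Qed.

(* ... or, for n odd, a splitting 1 = M0 + M1 into central orthogonal
   idempotents with T M0 even and T M1 odd: then T = W (T M0 + T M1 I)
   with W = M0 + M1 I^-1 central. *)
Lemma P_of_idempotents M0 M1 : odd n -> central M0 -> central M1 ->
  M0 + M1 = 1 -> M0 * M1 = 0 -> parity false (T * M0) -> parity true (T * M1) -> in_P T.
Proof.
move=> odd_n cM0 cM1 sum01 orth even0 odd1.
have cI := pseudoscalar_central odd_n.
have Isq2 : Isq * Isq = 1 by exact: coef_sq.
set J := Isq *: I.
have IJ : I * J = 1 by rewrite -scalerAr pseudoscalar_sq scalerA Isq2 scale1r.
have cJ : central J := centralZ _ cI.
have orth' : M1 * M0 = 0 by rewrite -cM0.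
have idem0 : M0 * M0 = M0.
  by have := congr1 (fun z => M0 * z) sum01; rewrite /= mulrDr orth addr0 mulr1.
have idem1 : M1 * M1 = M1.
  by have := congr1 (fun z => M1 * z) sum01; rewrite /= mulrDr orth' add0r mulr1.
set W := M0 + M1 * J; set W' := M0 + M1 * I.
have cW : central W by apply: centralD => //; apply: centralM.
have WW' : W * W' = 1.
  rewrite /W /W' mulrDl !mulrDr idem0 (mulrA M0) orth mul0r addr0.
  rewrite -(mulrA M1 J M0) (cJ M0) (mulrA M1 M0) orth' mul0r add0r.
  by rewrite -(mulrA M1 J) (mulrA J) (cJ M1) -(mulrA M1 J I) (cJ I) IJ mulr1 idem1.
have W'W : W' * W = 1 by rewrite -cW.
exists W, (W' * T); split => //; first by exists W'.
  split.
    exists (U * W); split; first by rewrite -mulrA (mulrA T) TU mul1r W'W.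
    by rewrite -mulrA (mulrA W) WW' mul1r UT.
  left; have -> : W' * T = T * M0 + T * M1 * I.
    by rewrite /W' mulrDl (cM0 T) -(mulrA M1 I T) (cI T) (mulrA M1 T I) (cM1 T).
  apply: parity_add => //; rewrite -[false]/(true (+) true); apply: parity_mul => //.
  by move: (parity_blade (X := setT)); rewrite cardsT card_ord odd_n.
by rewrite mulrA WW' mul1r.
Qed.

Hypothesis twisted_conj : forall v, grade 1 v -> grade 1 (T * v * U).

Lemma Gamma_intertwine i : T * e [set i] = (T * e [set i] * U) * T.
Proof. by rewrite -mulrA UT mulr1. Qed.

(* ~T T is central: ~(T v U) = T v U gives ~T T v = v ~T T. *)
Lemma Gamma_norm_central : central (reversion T * T).
Proof.
have revTU : reversion T * reversion U = 1 by rewrite -reversionM UT reversion1.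
apply: central_generators => i.
have := grade1_reversion (twisted_conj (grade1_generator i)).
rewrite !reversionM (grade1_reversion (grade1_generator i)) => rev_conj.
by rewrite -mulrA Gamma_intertwine -rev_conj !mulrA revTU mul1r.
Qed.

Lemma Gamma_norm_invertible : invertible (reversion T * T).
Proof.
exists (U * reversion U); split.
  by rewrite mulrA -(mulrA _ T) TU mulr1 -reversionM UT reversion1.
by rewrite mulrA -(mulrA U) -reversionM TU reversion1 mulr1 UT.
Qed.

(* The even and odd parts of T intertwine each generator the same way, so
   U T_0 and U T_1 are central. *)
Lemma Gamma_parts_central b : central (U * parity_part b T).
Proof.
apply: central_generators => i.
set w := T * e [set i] * U.
have odd_w : parity true w := grade1_parity (twisted_conj (grade1_generator i)).
have odd_e : parity true (e [set i]).
  by move: (parity_blade (X := [set i])); rewrite cards1.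
set T0 := parity_part false T; set T1 := parity_part true T.
have even_T0 : parity false T0 by apply: parity_partP.
have odd_T1 : parity true T1 by apply: parity_partP.
have split_eq : T1 * e [set i] + T0 * e [set i] = w * T1 + w * T0.
  by rewrite -mulrDl -mulrDr addrC /T0 /T1 -parity_part_split; exact: Gamma_intertwine.
have [odd_part even_part] := parity_split_eq (parity_mul odd_T1 odd_e)
  (parity_mul even_T0 odd_e) (parity_mul odd_w odd_T1) (parity_mul odd_w even_T0) split_eq.
have intertwine : parity_part b T * e [set i] = w * parity_part b T.
  by case: b; [exact: odd_part | exact: even_part].
by rewrite -mulrA intertwine /w !mulrA UT mul1r.
Qed.

(* Writing M_j = U T_j = a_j + b_j I with M_0 + M_1 = 1, one of the two
   criteria for P applies. *)
Lemma Gamma_sub_P : (0 < n)%N -> in_P T.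
Proof.
move=> n0.
set M0 := U * parity_part false T; set M1 := U * parity_part true T.
have cM0 : central M0 := Gamma_parts_central false.
have cM1 : central M1 := Gamma_parts_central true.
have TM b : parity b (T * (U * parity_part b T)).
  by rewrite mulrA TU mul1r; apply: parity_partP.
have sum01 : M0 + M1 = 1 by rewrite -mulrDr -parity_part_split.
set a := M0 set0; set c := M0 setT.
have M0E : M0 = zform a c := central_decomp n0 cM0.
have M1E : M1 = zform (1 - a) (- c).
  rewrite -(addKr M0 M1) sum01 {1}M0E addrC opprD addrA.
  by rewrite /zform scalerBl scale1r scaleNr.
case: (eqVneq (a * a - c * c * Isq) 0) => k0; last first.
  have [inv0 inv0'] := zform_inverse k0; rewrite -M0E in inv0 inv0'.
  exact: (P_of_central_unit cM0 inv0 inv0' (TM false)).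
case: (eqVneq ((1 - a) * (1 - a) - (- c) * (- c) * Isq) 0) => k1; last first.
  have [inv1 inv1'] := zform_inverse k1; rewrite -M1E in inv1 inv1'.
  exact: (P_of_central_unit cM1 inv1 inv1' (TM true)).
have [orth c_neq0] := zform_complementary k0 k1; rewrite -M0E -M1E in orth.
have odd_n : odd n := central_pseudoscalar_coord n0 cM0 c_neq0.
exact: (P_of_idempotents odd_n cM0 cM1 sum01 orth (TM false) (TM true)).
Qed.

End InvertibleElement.

Theorem Gamma_sub_Q T : (0 < n)%N -> in_Gamma T -> in_Q T.
Proof.
move=> n0 [U [[TU UT] twisted_conj]]; split; first by apply: (Gamma_sub_P (U := U)).
by split; [apply: (Gamma_norm_central (U := U)) | apply: (Gamma_norm_invertible (U := U))].
Qed.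

Lemma central_even_scalar x : (0 < n)%N -> central x -> parity false x -> x = x set0 *: 1.
Proof.
move=> n0 cx even_x; rewrite {1}(central_decomp n0 cx).
suff -> : x setT = 0 by rewrite scale0r addr0.
case: (boolP (odd n)) => odd_n; first by apply: even_x; rewrite cardsT card_ord odd_n.
by apply/eqP; apply: contraNT odd_n; apply: central_pseudoscalar_coord.
Qed.

(* For T = W S in Q, the norm ~S S of the homogeneous factor is a nonzero
   scalar: it is ~T T divided by the central unit ~W W, and it is even. *)
Lemma Q_factor_norm W S b : (0 < n)%N -> central W -> invertible W -> parity b S ->
  central (reversion (W * S) * (W * S)) -> invertible (reversion (W * S) * (W * S)) ->
  exists2 y, y != 0 & reversion S * S = y *: 1.
Proof.
move=> n0 cW [W' [WW' W'W]] homog cN [N' [NN' N'N]].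
set K := reversion W * W; set K' := W' * reversion W'.
have cK : central K by apply: centralM => //; apply: central_reversion.
have KK' : K * K' = 1.
  by rewrite /K /K' -mulrA (mulrA W) WW' mul1r -reversionM W'W reversion1.
have K'K : K' * K = 1.
  by rewrite /K /K' -mulrA (mulrA (reversion W')) -reversionM WW' reversion1 mul1r W'W.
have cK' : central K' := central_inverse cK K'K KK'.
have normE : reversion S * S = K' * (reversion (W * S) * (W * S)).
  rewrite reversionM -mulrA (mulrA (reversion W)) -/K (mulrA (reversion S)).
  by rewrite -(cK (reversion S)) -mulrA mulrA K'K mul1r.
have cY : central (reversion S * S) by rewrite normE; apply: centralM.
have even_Y : parity false (reversion S * S).
  by rewrite -(addbb b); apply: parity_mul => //; apply: parity_reversion.
exists ((reversion S * S) set0); last exact: central_even_scalar.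
apply/eqP => y0; have := congr1 (fun z => z * (N' * K)) normE.
rewrite (central_even_scalar n0 cY even_Y) y0 scale0r mul0r -mulrA (mulrA _ N') NN' mul1r K'K.
by move/eqP; rewrite eq_sym oner_eq0.
Qed.

(* In dimension at most 5, an odd reversion-invariant element without
   pseudoscalar part is a vector: reversion is -1 on grade 3. *)
Lemma selfrev_odd_grade1 x : (n <= 5)%N -> parity true x -> reversion x = x ->
  ((n = 5)%N -> x setT = 0) -> grade 1 x.
Proof.
move=> n5 odd_x rev_x top_x C C1.
have cardC : (#|C| <= n)%N.
  by have := subset_leq_card (subsetT C); rewrite cardsT card_ord.
case: (boolP (odd #|C|)) => oC; last by apply: odd_x; rewrite (negbTE oC).
have := congr1 (fun z => z C) rev_x; rewrite /= ffunE.
case E: #|C| cardC oC C1 => [|[|[|[|[|[|k]]]]]] //= cardC _ _.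
- by rewrite -signr_odd /= expr1 mulN1r => /eqP; rewrite eqNr => /eqP.
- have n5' : n = 5%N by apply/eqP; rewrite eqn_leq n5 cardC.
  have -> : C = setT by apply/eqP; rewrite eqEcard subsetT cardsT card_ord E n5'.
  by rewrite top_x.
- by move: (leq_trans cardC n5).
Qed.

(* For n odd (n > 1), the pseudoscalar part of S v ~S vanishes when ~S S is
   a scalar: <S v ~S I>_0 = <v I ~S S>_0 = y <v I>_0 = 0. *)
Lemma sandwich_pseudoscalar_coord S v (y : F) : odd n -> (1 < n)%N ->
  reversion S * S = y *: 1 -> grade 1 v -> (S * v * reversion S) setT = 0.
Proof.
move=> odd_n n1 normS hv.
have cI := pseudoscalar_central odd_n.
have scalarI x : (x * I) set0 = Isq * x setT by rewrite mul_blader_coord sym0d.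
suff : Isq * (S * v * reversion S) setT = 0.
  by move/eqP; rewrite mulf_eq0 (negbTE (coef_neq0 _ _)) => /eqP.
rewrite -scalarI.
rewrite -!mulrA scalar_partC -!mulrA (cI S) (mulrA (reversion S)) normS -scalerAl mul1r.
rewrite -scalerAr ffunE scalarE scalarI (hv setT) ?mulr0 //.
by rewrite cardsT card_ord; apply: contraTneq n1 => ->.
Qed.

Lemma grade1Z a x : grade 1 x -> grade 1 (a *: x).
Proof. by move=> hx C hC; rewrite ffunE hx ?scalarE ?mulr0. Qed.

(* Second half for n <= 5: Q is contained in Gamma.  For T = W S, the twisted
   conjugation T v T^-1 is y^-1 S v ~S, an odd reversion-invariant element
   with no pseudoscalar part, hence a vector. *)
Theorem Q_sub_Gamma T : (0 < n)%N -> (n <= 5)%N -> in_Q T -> in_Gamma T.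
Proof.
move=> n0 n5 [[W [S [cW invW [[S' [SS' S'S]] homogS] ->]]] [cN invN]].
have [b homog] : exists b, parity b S by case: homogS; [exists false | exists true].
have [y y0 normS] := Q_factor_norm n0 cW invW homog cN invN.
have S'E : S' = y^-1 *: reversion S.
  by rewrite -[reversion S]mulr1 -SS' mulrA normS -scalerAl mul1r scalerA mulVf // scale1r.
have [W' [WW' W'W]] := invW.
exists (S' * W'); split.
  split; first by rewrite -mulrA (mulrA S) SS' mul1r WW'.
  by rewrite -mulrA (mulrA W') W'W mul1r S'S.
move=> v hv.
have -> : W * S * v * (S' * W') = y^-1 *: (S * v * reversion S).
  by rewrite -!mulrA cW !mulrA -(mulrA _ W' W) W'W mulr1 S'E -scalerAr.
apply: grade1Z; apply: selfrev_odd_grade1 => //.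
- have -> : true = b (+) true (+) b by case: b {homog homogS}.
  apply: parity_mul; last exact: parity_reversion.
  by apply: parity_mul => //; apply: grade1_parity.
- by rewrite !reversionM reversionK (grade1_reversion hv) mulrA.
- by move=> n5'; apply: sandwich_pseudoscalar_coord normS hv; rewrite n5'.
Qed.

(* For n even with C(n, 2) odd, i.e. n = 2 mod 4, and n > 2 (e.g. n = 6),
   the pseudoscalar is reversion-odd and anticommutes with vectors, and
   T = 1 + 2I lies in Q but not in Gamma: T v T^-1 acquires a nonzero
   component along v I, of grade n - 1 > 1. *)
Section PseudoscalarReversionOdd.
Hypotheses (even_n : ~~ odd n) (odd_rev : odd 'C(n, 2)) (n_gt2 : (2 < n)%N).

Lemma reversion_pseudoscalar : reversion I = - I.
Proof.
by rewrite reversion_blade merge_sign_self cardsT card_ord -signr_odd odd_rev scaleN1r.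
Qed.

Lemma reversion_zform a b : reversion (zform a b) = zform a (- b).
Proof.
by rewrite /zform reversionD !reversionZ reversion1 reversion_pseudoscalar scalerN scaleNr.
Qed.

Lemma pseudoscalar_anticommute i : I * e [set i] = - (e [set i] * I).
Proof.
have n0 : (0 < n)%N by apply: leq_ltn_trans (ltn_ord i).
move: even_n; rewrite -{1}(prednK n0) /= negbK => odd_pred.
by rewrite pseudoscalar_generator -signr_odd odd_pred scaleN1r.
Qed.

(* The norm 1 - 4 I^2 of 1 + 2I is -3 or 5, hence nonzero. *)
Lemma norm_one_two_neq0 : 1 * 1 - 2 * 2 * Isq != 0.
Proof.
have : Isq ^+ 2 == 1 by rewrite expr2 coef_sq.
rewrite sqrf_eq1 => /orP [] /eqP ->.
  have -> : (1 * 1 - 2 * 2 * 1 : F) = - 3%:R by ring.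
  by rewrite oppr_eq0 pnatr_eq0.
have -> : (1 * 1 - 2 * 2 * -1 : F) = 5%:R by ring.
by rewrite pnatr_eq0.
Qed.

Lemma one_two_in_Q : in_Q (zform 1 2).
Proof.
set k := 1 * 1 - 2 * 2 * Isq; have k_neq0 : k != 0 := norm_one_two_neq0.
have normT : reversion (zform 1 2) * zform 1 2 = k *: 1.
  rewrite reversion_zform zformM; have -> : 1 * 2 + - 2 * 1 = 0 :> F by ring.
  by rewrite /zform scale0r addr0 /k; congr (_ *: _); ring.
have even_T : parity false (zform 1 2).
  apply: parity_add; apply: parity_scale; first exact: parity_one.
  by move: (parity_blade (X := setT)); rewrite cardsT card_ord (negbTE even_n).
split.
  exists 1, (zform 1 2); split; [exact: central1 | by exists 1; rewrite mulr1 | | by rewrite mul1r].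
  by split; [exists (k^-1 *: zform 1 (- 2)); apply: zform_inverse | left].
rewrite normT; split; first exact/centralZ/central1.
exists (k^-1 *: 1).
by split; rewrite -scalerAl mul1r scalerA ?(mulfV k_neq0) ?(mulVf k_neq0) scale1r.
Qed.

Lemma complement_card_neq1 (i : 'I_n) : #|setT :\ i| != 1%N.
Proof.
move: (cardsD1 i [set: 'I_n]); rewrite in_setT cardsT card_ord add1n => cardC.
by apply: contraTneq n_gt2 => C1; rewrite cardC C1.
Qed.

Lemma generator_zform_coord i a b :
  (e [set i] * zform a b) (setT :\ i) = b * coef [set i] setT.
Proof.
have CT : symd (setT :\ i) setT = [set i].
  by apply/setP => j; rewrite /symd !inE; case: (j == i).
have iC : e [set i] (setT :\ i) = 0.
  by rewrite ffunE; case: eqP => // CE; move: (complement_card_neq1 i); rewrite CE cards1.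
rewrite /zform mulrDr -!scalerAr mulr1 coordD !coordZ iC mul_blader_coord CT.
by rewrite ffunE eqxx mulr0 add0r mulr1.
Qed.

(* The twisted conjugate of e_i by 1 + 2I has coordinate -4/(1 - 4 I^2) on
   that blade, so 1 + 2I is not in Gamma. *)
Lemma one_two_notin_Gamma : ~ in_Gamma (zform 1 2).
Proof.
set k := 1 * 1 - 2 * 2 * Isq; have k_neq0 : k != 0 := norm_one_two_neq0.
move=> [U [[TU UT] twisted_conj]].
have UE : U = k^-1 *: zform 1 (- 2).
  have [_ U0T] := zform_inverse k_neq0.
  by rewrite -[U]mul1r -U0T -(mulrA _ (zform 1 2) U) TU mulr1.
have n0 : (0 < n)%N by apply: ltnW (ltnW n_gt2).
set i : 'I_n := Ordinal n0.
have intertwine : zform 1 2 * e [set i] = e [set i] * zform 1 (- 2).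
  rewrite /zform mulrDl mulrDr -!scalerAl -!scalerAr !mul1r !mulr1.
  by rewrite pseudoscalar_anticommute scalerN scaleNr.
have := twisted_conj _ (grade1_generator i) _ (complement_card_neq1 i).
rewrite intertwine UE -scalerAr -mulrA zformM coordZ generator_zform_coord.
move/eqP; rewrite mulf_eq0 invr_eq0 (negbTE k_neq0) mulf_eq0 (negbTE (coef_neq0 _ _)) orbF /=.
have -> : (1 * -2 + -2 * 1 : F) = - 4%:R by ring.
by rewrite oppr_eq0 pnatr_eq0.
Qed.

Theorem Q_not_sub_Gamma : exists T, in_Q T /\ ~ in_Gamma T.
Proof. by exists (zform 1 2); split; [exact: one_two_in_Q | exact: one_two_notin_Gamma]. Qed.
End PseudoscalarReversionOdd.
End NormalisedClifford.

Section Translation.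
Variables (F : numFieldType) (n : nat) (eta : 'I_n -> F).
Implicit Types T : cl_alg eta.

Lemma cunitE T : cunit eta T <-> invertible T.
Proof. by rewrite /cunit /cinv_of (coneE eta) -(oneE eta). Qed.

Lemma GammaE T : Gamma eta T <-> in_Gamma T.
Proof. by rewrite /Gamma /cinv_of (coneE eta) -(oneE eta). Qed.

Lemma even_partE T : even_part T <-> parity false T.
Proof. by split=> h C hC; apply: h; move: hC; case: (odd #|C|). Qed.

Lemma odd_partE T : odd_part T <-> parity true T.
Proof. by split=> h C hC; apply: h; move: hC; case: (odd #|C|). Qed.

Lemma PsetE T : Pset eta T <-> in_P T.
Proof.
split=> -[W [S [cW invW [invS homog] ->]]]; exists W, S.
  split=> //; [exact/cunitE | split; first exact/cunitE].
  by case: homog => [/even_partE|/odd_partE]; [left | right].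
split=> //; [exact/cunitE | split; first exact/cunitE].
by case: homog => [/even_partE|/odd_partE]; [left | right].
Qed.

Lemma QsetE T : Qset eta T <-> in_Q T.
Proof.
split=> -[PT [cN invN]].
  by split; [exact/PsetE | split; [exact: cN | exact/cunitE]].
by split; [exact/PsetE | split; [exact: cN | exact/(cunitE (reversion T * T))]].
Qed.

End Translation.

Section Classification.
Variables (F : numFieldType) (n : nat) (eta : 'I_n -> F).
Hypothesis eta_sq : forall i, eta i * eta i = 1.

Corollary Gamma_eq_Q : (2 <= n <= 5)%N -> forall T : clif F n, Gamma eta T <-> Qset eta T.
Proof.
move=> /andP [n2 n5] T; have n0 : (0 < n)%N by apply: leq_trans n2.
by rewrite GammaE QsetE; split; [apply: Gamma_sub_Q | apply: Q_sub_Gamma].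
Qed.

Corollary Gamma_neq_Q_six : n = 6%N -> exists T : clif F n, ~ (Gamma eta T <-> Qset eta T).
Proof.
move=> n6; have [|||T [QT notGT]] := Q_not_sub_Gamma eta_sq; rewrite ?n6 //.
by exists T; rewrite GammaE QsetE => -[_ /(_ QT)].
Qed.

End Classification.

(* Both metrics of the statement are normalised, so Classification applies. *)
Theorem mainTheorem14 (R : realType) :
  (* real Clifford algebras Cl_{p,q}, n = p + q *)
  (forall p q : nat, (2 <= p + q <= 5)%N ->
     forall T : clif R (p + q),
       Gamma (@eta_pq R p q) T <-> Qset (@eta_pq R p q) T) /\
  (forall p q : nat, (p + q = 6)%N ->
     exists T : clif R (p + q),
       ~ (Gamma (@eta_pq R p q) T <-> Qset (@eta_pq R p q) T)) /\
  (* complex Clifford algebras Cl(C^n) *)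
  (forall n : nat, (2 <= n <= 5)%N ->
     forall T : clif R[i] n, Gamma (@eta_C R n) T <-> Qset (@eta_C R n) T) /\
  (forall n : nat, n = 6%N ->
     exists T : clif R[i] n, ~ (Gamma (@eta_C R n) T <-> Qset (@eta_C R n) T)).
Proof.
have eta_pq_sq p q i : @eta_pq R p q i * @eta_pq R p q i = 1.
  by rewrite /eta_pq; case: ifP; rewrite ?mulrNN mulr1.
have eta_C_sq n i : @eta_C R n i * @eta_C R n i = 1 by rewrite /eta_C mulr1.
split; [|split; [|split]] => [p q|p q|n|n].
- exact: Gamma_eq_Q.
- exact: Gamma_neq_Q_six.
- exact: Gamma_eq_Q.
- exact: Gamma_neq_Q_six.
Qed.
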